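(* Let $\mathcal{H}$ be a finite-dimensional Hilbert space, $\mathcal{O}\in\mathcal{L}(\mathcal{H})$ Hermitian, $\rho$ a quantum state on $\mathcal{H}$, $n\geq1$ and $1\leq k\leq n$. Let \[T_k=\frac{1}{2\lfloor n/k\rfloor}\sum_{i=0}^{\lfloor n/k\rfloor-1}\left(A_i+A_i^\dagger\right),\] where $A_i=U_{s_{J_i}}\,\big(I^{\otimes ik}\otimes\mathcal{O}\otimes I^{\otimes n-ik-1}\big)$ and $J_i=(ik+1,\ldots,ik+k)$. Then $\mathbf{Var}[T_k]\leq \dfrac{2k\|\mathcal{O}\|^2}{n}$, where $\|\mathcal{O}\|$ is the operator norm.
   Context: For $\pi$ in the symmetric group $\mathfrak{S}_n$, $U_\pi$ is the unitary on $\mathcal{H}^{\otimes n}$ with $U_\pi\ket{\psi_1}\cdots\ket{\psi_n}=\ket{\psi_{\pi^{-1}(1)}}\cdots\ket{\psi_{\pi^{-1}(n)}}$. For a sequence $J=(j_1,\ldots,j_l)$ of distinct elements of $\{1,\ldots,n\}$, $s_J\in\mathfrak{S}_n$ maps $j_t\mapsto j_{t+1}$ for $t<l$, $j_l\mapsto j_1$, and fixes all other elements. For a Hermitian $\mathcal{Q}$ on $\mathcal{H}^{\otimes n}$, $\mathbf{Var}[\mathcal{Q}]=\operatorname{tr}(\mathcal{Q}^2\rho^{\otimes n})-\operatorname{tr}(\mathcal{Q}\rho^{\otimes n})^2$. *)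

From HB Require Import structures.
From mathcomp Require Import all_boot all_order all_algebra all_fingroup.
From mathcomp Require Import boolp classical_sets reals.
From mathcomp Require Import complex.
Set Implicit Arguments. Unset Strict Implicit. Unset Printing Implicit Defensive.
Import Order.TTheory GRing.Theory Num.Theory.
Local Open Scope ring_scope.

(* Convention: H = C^d with C = R[i] (complex numbers over a realType R).
   H^{(x)n} has the orthonormal product basis e_x = |x_1> ... |x_n>, indexed by
   x : {ffun 'I_n -> 'I_d}; operators on H^{(x)n} are square matrices of
   size #|{ffun 'I_n -> 'I_d}| (= d^n), the basis vector of row/column index i
   being e_(enum_val i).  Sites are 0-indexed: the paper's site j is our j-1. *)

Section QDefs.
Variable R : realType.
Local Notation C := R[i].

Definition tidx (d n : nat) := {ffun 'I_n -> 'I_d}.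
Definition tdim (d n : nat) : nat := #|{: tidx d n}|.

Definition adjmx m p (A : 'M[C]_(m, p)) : 'M[C]_(p, m) :=
  (map_mx (@conjc R) A)^T.

Definition vnorm2 m (v : 'cV[C]_m) : R :=
  \sum_(i < m) (complex.Re (v i 0) ^+ 2 + complex.Im (v i 0) ^+ 2).
Definition vnorm m (v : 'cV[C]_m) : R := Num.sqrt (vnorm2 v).

Definition opnorm m (A : 'M[C]_m) : R :=
  reals.sup [set r : R | exists v : 'cV[C]_m, vnorm v = 1 /\ r = vnorm (A *m v)]%classic.

Definition is_hermitian m (A : 'M[C]_m) : Prop := adjmx A = A.

Definition psd m (A : 'M[C]_m) : Prop :=
  forall v : 'cV[C]_m, 0 <= (adjmx v *m (A *m v)) 0 0.

Definition is_state m (rho : 'M[C]_m) : Prop :=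
  is_hermitian rho /\ psd rho /\ \tr rho = 1.

Definition tens d n (A : 'I_n -> 'M[C]_d) : 'M[C]_(tdim d n) :=
  \matrix_(i, j) \prod_(t < n)
     A t ((enum_val i : tidx d n) t) ((enum_val j : tidx d n) t).

(* U_pi |psi_1 ... psi_n> = |psi_(pi^-1 1) ... psi_(pi^-1 n)>, i.e. on the
   product basis U_pi e_y = e_(y o pi^-1):  <e_x|U_pi|e_y> = [x o pi == y]. *)
Definition Uperm d n (pi : {perm 'I_n}) : 'M[C]_(tdim d n) :=
  \matrix_(i, j) ([forall t : 'I_n,
     (enum_val i : tidx d n) (pi t) == (enum_val j : tidx d n) t])%:R.

Definition Var d n (rho : 'M[C]_d) (Q : 'M[C]_(tdim d n)) : C :=
  let rhon := @tens d n (fun _ : 'I_n => rho) in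
  \tr (Q *m Q *m rhon) - (\tr (Q *m rhon)) ^+ 2.
End QDefs.

(* the cycle s_J for a sequence J of distinct elements: j_t |-> j_(t+1),
   j_l |-> j_1, other elements fixed.  This is exactly path.next. *)
Lemma sJ_inj n (J : seq 'I_n) : uniq J -> injective (next J).
Proof. by move=> uJ x y /(congr1 (prev J)); rewrite !prev_next. Qed.

Definition sJ n (J : seq 'I_n) (uJ : uniq J) : {perm 'I_n} := perm (sJ_inj uJ).

(* J_i = (ik+1, ..., ik+k) (paper, 1-indexed) = (ik, ..., ik+k-1) 0-indexed;
   entries >= n are dropped (never happens for i < n %/ k). *)
Definition Jblock n k i : seq 'I_n := pmap insub (iota (i * k) k).

Lemma Jblock_uniq n k i : uniq (@Jblock n k i).
Proof. by rewrite pmap_sub_uniq // iota_uniq. Qed.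

Section Tk.
Variable R : realType.
Local Notation C := R[i].

Definition Oat d n (O : 'M[C]_d) (p : nat) : 'M[C]_(tdim d n) :=
  tens (fun t : 'I_n => if val t == p then O else 1%:M).

Definition Ablk d n k (O : 'M[C]_d) i : 'M[C]_(tdim d n) :=
  @Uperm R d n (sJ (@Jblock_uniq n k i)) *m @Oat d n O (i * k).

Definition Tk d n k (O : 'M[C]_d) : 'M[C]_(tdim d n) :=
  (2 * (n %/ k)%:R)^-1 *:
    \sum_(i < n %/ k) (@Ablk d n k O i + adjmx (@Ablk d n k O i)).
End Tk.

(* Factor rho = V V^dagger by the spectral theorem, so that E[M] = tr(M rho^(x)n)
   is a positive functional, real on Hermitian operators.  Each A_i is a
   permuted tensor product which, like A_i^dagger, acts as the identity outside
   the block J_i; under a product state, operators supported on disjoint blocks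
   are uncorrelated, so with m = n %/ k we get
   Var[T_k] = (2m)^-2 sum_i Var[A_i + A_i^dagger].  Each summand is at most
   E[(A + A^dagger)^2] <= 2 E[A A^dagger + A^dagger A] (add the nonnegative
   E[(A - A^dagger)^dagger (A - A^dagger)]), and A_i A_i^dagger, A_i^dagger A_i
   are O^2 at a single site, with expectation tr(O^2 rho) <= ||O||^2.  Hence
   Var[T_k] <= ||O||^2 / m <= 2k ||O||^2 / n, as n < (m + 1) k <= 2 m k. *)

From HB Require Import structures.
From mathcomp Require Import all_boot all_order all_algebra all_fingroup.
From mathcomp Require Import reals complex spectral.
From mathcomp Require Import ring.
Import Order.TTheory GRing.Theory Num.Theory.
Local Open Scope ring_scope.
Set Implicit Arguments. Unset Strict Implicit. Unset Printing Implicit Defensive.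

Section Adjoint.
Variable R : realType.
Local Notation C := R[i].

Lemma adjmxE m p (A : 'M[C]_(m, p)) i j : adjmx A i j = (A j i)^*.
Proof. by rewrite !mxE. Qed.

Lemma adjmxK m p (A : 'M[C]_(m, p)) : adjmx (adjmx A) = A.
Proof. by apply/matrixP => i j; rewrite !adjmxE conjCK. Qed.

Lemma adjmxM m p q (A : 'M[C]_(m, p)) (B : 'M[C]_(p, q)) :
  adjmx (A *m B) = adjmx B *m adjmx A.
Proof.
apply/matrixP => i j; rewrite adjmxE !mxE rmorph_sum; apply: eq_bigr => l _.
by rewrite !adjmxE rmorphM mulrC.
Qed.

Lemma adjmxD m p (A B : 'M[C]_(m, p)) : adjmx (A + B) = adjmx A + adjmx B.
Proof. by apply/matrixP => i j; rewrite [RHS]mxE !adjmxE mxE rmorphD. Qed.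

Lemma adjmxN m p (A : 'M[C]_(m, p)) : adjmx (- A) = - adjmx A.
Proof. by apply/matrixP => i j; rewrite [RHS]mxE !adjmxE mxE rmorphN. Qed.

Lemma adjmx1 m : adjmx (1%:M : 'M[C]_m) = 1%:M.
Proof. by apply/matrixP => i j; rewrite adjmxE !mxE rmorph_nat eq_sym. Qed.

Lemma mxtrace_adjmx m (A : 'M[C]_m) : \tr (adjmx A) = (\tr A)^*.
Proof. by rewrite /mxtrace rmorph_sum; apply: eq_bigr => i _; rewrite adjmxE. Qed.

Lemma mxtrace_adjmx_mul_ge0 m p (Z : 'M[C]_(m, p)) : 0 <= \tr (adjmx Z *m Z).
Proof.
apply: sumr_ge0 => j _; rewrite mxE; apply: sumr_ge0 => i _.
by rewrite adjmxE mulrC mul_conjC_ge0.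
Qed.

End Adjoint.

Section Expectation.
Variables (R : realType) (m : nat).
Local Notation C := R[i].
Implicit Types W M Q Y A : 'M[C]_m.

Definition expect W M : C := \tr (M *m W).
Definition variance W Q : C := expect W (Q *m Q) - expect W Q ^+ 2.

Lemma expectD W : {morph expect W : M1 M2 / M1 + M2}.
Proof. by move=> M1 M2; rewrite /expect mulmxDl mxtraceD. Qed.

Lemma expectN W M : expect W (- M) = - expect W M.
Proof. by rewrite /expect mulNmx linearN. Qed.

Lemma expectZ W c M : expect W (c *: M) = c * expect W M.
Proof. by rewrite /expect -scalemxAl mxtraceZ. Qed.

Lemma expect_sum W I (r : seq I) (P : pred I) (F : I -> 'M[C]_m) :
  expect W (\sum_(i <- r | P i) F i) = \sum_(i <- r | P i) expect W (F i).
Proof.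
by apply: (big_morph _ (expectD W)); rewrite /expect mul0mx mxtrace0.
Qed.

Lemma varianceZ W c Q : variance W (c *: Q) = c ^+ 2 * variance W Q.
Proof.
by rewrite /variance -scalemxAl -scalemxAr !expectZ mulrBr exprMn mulrA -expr2.
Qed.

Lemma variance_sum_uncorrelated W l (Q : 'I_l -> 'M[C]_m) :
  (forall i j, i != j ->
     expect W (Q i *m Q j) = expect W (Q i) * expect W (Q j)) ->
  variance W (\sum_i Q i) = \sum_i variance W (Q i).
Proof.
move=> uncorr; rewrite /variance mulmx_suml !expect_sum.
under eq_bigr do rewrite mulmx_sumr expect_sum.
rewrite expr2 mulr_suml -sumrB; apply: eq_bigr => i _.
rewrite mulr_sumr -sumrB (bigD1 i) //= big1 ?addr0 ?expr2 // => j ji.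
by rewrite uncorr ?subrr // eq_sym.
Qed.

Variable V : 'M[C]_m.
Local Notation W := (V *m adjmx V).

Lemma expect_adj_mul_ge0 Y : 0 <= expect W (adjmx Y *m Y).
Proof.
rewrite /expect mulmxA mxtrace_mulC !mulmxA -adjmxM -mulmxA.
exact: mxtrace_adjmx_mul_ge0.
Qed.

Lemma expect_hermitian_real M : adjmx M = M -> (expect W M)^* = expect W M.
Proof.
move=> hM; rewrite /expect -mxtrace_adjmx !adjmxM adjmxK hM.
by rewrite mxtrace_mulC mulmxA.
Qed.

Lemma variance_le_expect Q : adjmx Q = Q -> variance W Q <= expect W (Q *m Q).
Proof.
move=> hQ; rewrite /variance lerBlDr lerDl expr2.
by rewrite -{2}(expect_hermitian_real hQ) mul_conjC_ge0.
Qed.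

Lemma expect_sqr_hermpart_le A :
  expect W ((A + adjmx A) *m (A + adjmx A)) <=
  2 * (expect W (A *m adjmx A) + expect W (adjmx A *m A)).
Proof.
have := expect_adj_mul_ge0 (A - adjmx A).
rewrite adjmxD adjmxN adjmxK !(mulmxDl, mulmxDr, mulNmx, mulmxN).
rewrite !(expectD, expectN).
set a := expect W (A *m A); set b := expect W (A *m adjmx A).
set c := expect W (adjmx A *m A); set e := expect W (adjmx A *m adjmx A).
move=> hD; rewrite -subr_ge0.
suff -> : 2 * (b + c) - (a + b + (c + e)) = c - e + (- a - - b) by [].
by ring.
Qed.

End Expectation.

Section Spectral.
Variable R : realType.
Local Notation C := R[i].

Lemma psd_factor m (rho : 'M[C]_m) : is_hermitian rho -> psd rho ->
  exists V : 'M[C]_m, rho = V *m adjmx V.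
Proof.
move=> hrho psd_rho.
have adjmx_trmxC p q (A : 'M[C]_(p, q)) : adjmx A = (A ^t*)%sesqui.
  by rewrite /adjmx map_trmx.
have /orthomx_spectralP : rho \is normalmx.
  by apply/eqP; rewrite -adjmx_trmxC hrho.
set P := spectralmx rho; set D := spectral_diag rho.
have PPadj : P *m adjmx P = 1%:M.
  by rewrite adjmx_trmxC; apply/unitarymxP/spectral_unitarymx.
rewrite invmx_unitary ?spectral_unitarymx // -adjmx_trmxC => rhoE.
have D_ge0 j : 0 <= D 0 j.
  have := psd_rho (adjmx (row j P)).
  have -> : (adjmx (adjmx (row j P)) *m (rho *m adjmx (row j P))) 0 0 =
            (P *m rho *m adjmx P) j j.
    by rewrite adjmxK mulmxA -row_mul !mxE; apply: eq_bigr => l _; rewrite !mxE.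
  by rewrite rhoE !mulmxA PPadj mul1mx -mulmxA PPadj mulmx1 mxE eqxx mulr1n.
set s := \row_j sqrtC (D 0 j).
have adjmx_s : adjmx (diag_mx s) = diag_mx s.
  apply/matrixP => i l; rewrite adjmxE !mxE eq_sym.
  by case: eqP => [->|_]; rewrite ?mulr0n ?conjC0 // mulr1n geC0_conj ?sqrtC_ge0.
exists (adjmx P *m diag_mx s).
rewrite adjmxM adjmxK adjmx_s rhoE -!mulmxA; congr (_ *m _).
rewrite mulmxA mulmx_diag; congr (diag_mx _ *m _).
by apply/rowP => j; rewrite !mxE -expr2 sqrtCK.
Qed.

End Spectral.

Import ComplexField.Normc.

Section OperatorNorm.
Variable R : realType.
Local Notation C := R[i].

Lemma vnorm2_ge0 m (v : 'cV[C]_m) : 0 <= vnorm2 v.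
Proof. by apply: sumr_ge0 => i _; rewrite addr_ge0 ?sqr_ge0. Qed.

Lemma vnorm_ge0 m (v : 'cV[C]_m) : 0 <= vnorm v.
Proof. exact: sqrtr_ge0. Qed.

Lemma vnorm_sqr m (v : 'cV[C]_m) : vnorm v ^+ 2 = vnorm2 v.
Proof. by rewrite sqr_sqrtr ?vnorm2_ge0. Qed.

Lemma vnorm2E m (v : 'cV[C]_m) : (vnorm2 v)%:C%C = \sum_i `|v i 0| ^+ 2.
Proof. by rewrite rmorph_sum; apply: eq_bigr => i _; exact: add_Re2_Im2. Qed.

Lemma vnorm2_adjmx m (v : 'cV[C]_m) : (adjmx v *m v) 0 0 = (vnorm2 v)%:C%C.
Proof.
by rewrite vnorm2E mxE; apply: eq_bigr => i _; rewrite adjmxE sqr_normc mulrC.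
Qed.

Lemma vnorm2_eq0 m (v : 'cV[C]_m) : vnorm2 v = 0 -> v = 0.
Proof.
move=> v0; apply/matrixP => i j; rewrite ord1 mxE.
have vsum0 : \sum_l `|v l 0| ^+ 2 = 0 by rewrite -vnorm2E v0.
have := psumr_eq0P (fun l _ => exprn_ge0 2 (normr_ge0 (v l 0))) vsum0 (i := i) isT.
by move=> /eqP; rewrite sqrf_eq0 normr_eq0 => /eqP.
Qed.

Lemma vnorm2Z m (a : R) (v : 'cV[C]_m) : vnorm2 (a%:C%C *: v) = a ^+ 2 * vnorm2 v.
Proof.
rewrite /vnorm2 mulr_sumr; apply: eq_bigr => i _; rewrite mxE.
by case: (v i 0) => x y /=; rewrite !mul0r !subr0 !addr0 !exprMn mulrDr.
Qed.

Lemma vnorm_mulmx_ub m (A : 'M[C]_m) (u : 'cV[C]_m) : vnorm u = 1 ->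
  vnorm (A *m u) <= Num.sqrt (\sum_i (\sum_j normc (A i j)) ^+ 2).
Proof.
move=> u1; have normcC (z : C) : (normc z)%:C%C = `|z|.
  by rewrite normc_def; case: z.
rewrite /vnorm ler_sqrt; last by apply: sumr_ge0 => i _; exact: sqr_ge0.
have u_le1 j : `|u j 0| <= 1.
  rewrite -(@expr_le1 _ 2) //.
  have <- : (vnorm2 u)%:C%C = 1 by rewrite -vnorm_sqr u1 expr1n.
  by rewrite vnorm2E (bigD1 j) //= lerDl sumr_ge0 // => l _; rewrite exprn_ge0.
rewrite -lecR vnorm2E rmorph_sum /=; apply: ler_sum => i _.
rewrite rmorphXn rmorph_sum /=; apply: lerXn2r; rewrite ?nnegrE //.
  by apply: sumr_ge0 => j _; rewrite normcC.
rewrite mxE; apply: le_trans (ler_norm_sum _ _ _) _; apply: ler_sum => j _.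
by rewrite normcC normrM -{2}(mulr1 `|A i j|) ler_wpM2l.
Qed.

Lemma vnorm2_mulmx_le m (A : 'M[C]_m) (v : 'cV[C]_m) :
  vnorm2 (A *m v) <= opnorm A ^+ 2 * vnorm2 v.
Proof.
have [v0|v_neq0] := eqVneq (vnorm2 v) 0.
  rewrite v0 mulr0 (vnorm2_eq0 v0) mulmx0 /vnorm2 big1 // => i _.
  by rewrite mxE /= expr0n addr0.
have v_gt0 : 0 < vnorm v by rewrite sqrtr_gt0 lt_def v_neq0 vnorm2_ge0.
set u := ((vnorm v)^-1)%:C%C *: v.
have vE : v = (vnorm v)%:C%C *: u.
  by rewrite /u scalerA -rmorphM mulfV ?gt_eqF // scale1r.
have u1 : vnorm u = 1.
  rewrite /vnorm vnorm2Z -vnorm_sqr exprVn mulVf ?sqrtr1 //.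
  by rewrite expf_neq0 // gt_eqF.
have Au_le : vnorm (A *m u) <= opnorm A.
  apply: sup_upper_bound; last by exists u.
  split; first by exists (vnorm (A *m u)), u.
  exists (Num.sqrt (\sum_i (\sum_j normc (A i j)) ^+ 2)) => r [w [w1 ->]].
  exact: vnorm_mulmx_ub.
rewrite {1}vE -scalemxAr vnorm2Z -!vnorm_sqr mulrC.
rewrite ler_wpM2r ?exprn_ge0 ?vnorm_ge0 //.
by rewrite lerXn2r // nnegrE ?vnorm_ge0 // (le_trans (vnorm_ge0 _) Au_le).
Qed.

Lemma mxtrace_adjmx_mul_cols m p (Z : 'M[C]_(m, p)) :
  \tr (adjmx Z *m Z) = \sum_j (vnorm2 (col j Z))%:C%C.
Proof.
apply: eq_bigr => j _; rewrite -vnorm2_adjmx !mxE; apply: eq_bigr => i _.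
by rewrite !adjmxE !mxE.
Qed.

Lemma expect_sqr_le_opnorm m (O V : 'M[C]_m) : is_hermitian O ->
  \tr (V *m adjmx V) = 1 ->
  expect (V *m adjmx V) (O *m O) <= (opnorm O ^+ 2)%:C%C.
Proof.
move=> hO tr1; rewrite /expect mulmxA mxtrace_mulC -mulmxA.
have -> : adjmx V *m (O *m (O *m V)) = adjmx (O *m V) *m (O *m V).
  by rewrite adjmxM hO mulmxA.
rewrite mxtrace_adjmx_mul_cols.
rewrite -[X in _ <= X]mulr1 -tr1 mxtrace_mulC mxtrace_adjmx_mul_cols mulr_sumr.
apply: ler_sum => j _; rewrite -rmorphM lecR colE -mulmxA -colE.
exact: vnorm2_mulmx_le.
Qed.

End OperatorNorm.

Section PermutedTensor.
Variables (R : realType) (d n : nat).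
Local Notation C := R[i].
Local Notation X := (tidx d n).
Local Notation N := (tdim d n).
Implicit Types (p q : {perm 'I_n}) (E F : 'I_n -> 'M[C]_d) (rho : 'M[C]_d).

(* [ptens p E] is U_p (E_0 (x) ... (x) E_(n-1)) (see [Uperm_mul_tens]); unlike
   plain tensor products, these operators are closed under products and
   adjoints. *)
Definition ptens p E : 'M[C]_N :=
  \matrix_(i, j) \prod_t E t ((enum_val i : X) (p t)) ((enum_val j : X) t).

Lemma sum_enum_val (G : X -> C) : \sum_(k < N) G (enum_val k) = \sum_x G x.
Proof. by rewrite -big_enum_val. Qed.

Lemma ptens_mul p E q F :
  ptens p E *m ptens q F = ptens (q * p) (fun t => E (q t) *m F t).
Proof.
apply/matrixP => i j; rewrite [LHS]mxE [RHS]mxE.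
under [LHS]eq_bigr do rewrite !mxE.
set x := enum_val i; set y := enum_val j.
rewrite (sum_enum_val (fun z =>
  (\prod_t E t (x (p t)) (z t)) * \prod_t F t (z (q t)) (y t))).
rewrite (eq_bigr (fun z : X =>
  \prod_t (E (q t) (x (p (q t))) (z (q t)) * F t (z (q t)) (y t)))); last first.
  by move=> z _; rewrite (reindex_inj (@perm_inj _ q)) -big_split.
rewrite (reindex_inj (h := fun w : X => [ffun t => w ((q^-1)%g t)])); last first.
  move=> w1 w2 /ffunP w12; apply/ffunP => t.
  by have := w12 (q t); rewrite !ffunE permK.
under eq_bigr => w _ do under eq_bigr => t _ do rewrite !ffunE permK.
rewrite -(bigA_distr_bigA (fun t a => E (q t) (x (p (q t))) a * F t a (y t))) /=.
by apply: eq_bigr => t _; rewrite mxE permM.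
Qed.

Lemma adjmx_ptens p E :
  adjmx (ptens p E) = ptens p^-1%g (fun t => adjmx (E (p^-1%g t))).
Proof.
apply/matrixP => i j; rewrite adjmxE !mxE rmorph_prod.
rewrite [RHS](reindex_inj (@perm_inj _ p)) /=.
by apply: eq_bigr => t _; rewrite permK adjmxE.
Qed.

Lemma tens_ptens E : tens E = ptens 1 E.
Proof.
by apply/matrixP => i j; rewrite !mxE; apply: eq_bigr => t _; rewrite perm1.
Qed.

Lemma Uperm_mul_tens p E : Uperm R d p *m tens E = ptens p E.
Proof.
rewrite tens_ptens; apply/matrixP => i j; rewrite !mxE.
under [LHS]eq_bigr do rewrite !mxE.
set x := enum_val i; set y := enum_val j.
rewrite (sum_enum_val (fun z => [forall t, x (p t) == z t]%:R *
    \prod_t E t (z ((1%g : {perm 'I_n}) t)) (y t))).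
rewrite (bigD1 [ffun t => x (p t)]) //= [X in _ + X]big1 => [|z /eqP z_neq].
  case: forallP => [_|[]]; last by move=> t; rewrite ffunE.
  by rewrite mul1r addr0; apply: eq_bigr => t _; rewrite perm1 ffunE.
case: forallP => [xz|]; last by rewrite mul0r.
by case: z_neq; apply/ffunP => t; rewrite ffunE (eqP (xz t)).
Qed.

Lemma tens_mul_adj (V : 'M[C]_d) :
  tens (fun _ : 'I_n => V *m adjmx V) =
  tens (fun _ : 'I_n => V) *m adjmx (tens (fun _ : 'I_n => V)).
Proof. by rewrite !tens_ptens adjmx_ptens ptens_mul invg1 mul1g. Qed.

Local Notation Eprod rho := (expect (tens (fun _ : 'I_n => rho))).

Lemma VarE rho (Q : 'M[C]_N) :
  Var rho Q = variance (tens (fun _ : 'I_n => rho)) Q.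
Proof. by []. Qed.

Lemma expect_ptens rho p E :
  Eprod rho (ptens p E) = \sum_(x : X) \prod_t (E t *m rho) (x (p t)) (x t).
Proof.
rewrite /expect tens_ptens ptens_mul mul1g /mxtrace -sum_enum_val.
by apply: eq_bigr => k _; rewrite mxE; apply: eq_bigr => t _; rewrite perm1.
Qed.

Lemma sum_prod_diag rho : \sum_(x : X) \prod_t rho (x t) (x t) = \tr rho ^+ n.
Proof.
by rewrite -(bigA_distr_bigA (fun (t : 'I_n) a => rho a a)) prodr_const card_ord.
Qed.

Definition splice (S : {set 'I_n}) (x y : X) : X :=
  [ffun t => if t \in S then x t else y t].

Lemma sum_mul_splice (S : {set 'I_n}) (F D G1 G2 : X -> C) :
  (forall x y, F x * D y = G1 (splice S x y) * G2 (splice S y x)) ->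
  (\sum_x F x) * (\sum_x D x) = (\sum_x G1 x) * (\sum_x G2 x).
Proof.
move=> FD; rewrite !big_distrlr !pair_bigA /=.
pose swap (u : X * X) := (splice S u.1 u.2, splice S u.2 u.1).
have swapK : involutive swap.
  move=> [x y]; congr pair; apply/ffunP => t; rewrite !ffunE; by case: (t \in S).
rewrite [RHS](reindex_inj (inv_inj swapK)) /=.
by apply: eq_bigr => -[x y] _; exact: FD.
Qed.

Definition local (S : {set 'I_n}) (M : 'M[C]_N) := exists p E,
  [/\ M = ptens p E, perm_on S p & forall t, t \notin S -> E t = 1%:M].

Lemma local_subset (S S' : {set 'I_n}) M :
  S \subset S' -> local S M -> local S' M.
Proof.
move=> sSS' [p [E [-> pS ES]]]; exists p, E; split=> //.
  exact: subset_trans pS sSS'.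
by move=> t /(contra (subsetP sSS' t))/ES.
Qed.

Lemma local_adjmx S M : local S M -> local S (adjmx M).
Proof.
move=> [p [E [-> pS ES]]]; exists p^-1%g, (fun t => adjmx (E (p^-1%g t))).
split; [exact: adjmx_ptens | exact: perm_onV |].
by move=> t tS; rewrite (out_perm (perm_onV pS)) // ES // adjmx1.
Qed.

Lemma expect_mul_local rho S M1 M2 : \tr rho = 1 ->
  local S M1 -> local (~: S) M2 ->
  Eprod rho (M1 *m M2) = Eprod rho M1 * Eprod rho M2.
Proof.
move=> tr1 [p1 [E1 [-> p1S E1S]]] [p2 [E2 [-> p2S E2S]]].
(* Multiplied by 1 = sum_x prod_t rho (x t) (x t), the double sum over pairs
   of indices can be re-split along S. *)
have diag1 : \sum_(x : X) \prod_t rho (x t) (x t) = 1.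
  by rewrite sum_prod_diag tr1 expr1n.
rewrite ptens_mul !expect_ptens -[LHS]mulr1 -[X in _ * X]diag1.
apply: (sum_mul_splice (S := S)) => x y /=.
rewrite -!big_split /=; apply: eq_bigr => t _.
rewrite !ffunE permM; case: (boolP (t \in S)) => tS.
  have tS' : t \notin ~: S by rewrite inE tS.
  by rewrite (out_perm p2S tS') E2S // mulmx1 mul1mx (perm_closed _ p1S) tS.
have tS' : t \in ~: S by rewrite inE.
have : p2 t \in ~: S by rewrite (perm_closed _ p2S).
rewrite inE => p2tS.
rewrite (out_perm p1S p2tS) (out_perm p1S tS) (negbTE p2tS) (negbTE tS).
by rewrite !E1S // !mul1mx mulrC.
Qed.

Lemma expect_single_site rho F t0 : \tr rho = 1 ->
  (forall t, t != t0 -> F t = 1%:M) -> Eprod rho (ptens 1 F) = \tr (F t0 *m rho).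
Proof.
move=> tr1 F1; rewrite expect_ptens.
under eq_bigr do under eq_bigr do rewrite perm1.
rewrite -(bigA_distr_bigA (fun t a => (F t *m rho) a a)) /= (bigD1 t0) //=.
by rewrite [X in _ * X]big1 ?mulr1 // => t /F1 ->; rewrite mul1mx.
Qed.

Lemma expect_mul_local_hermpart rho S M1 M2 : \tr rho = 1 ->
  local S M1 -> local (~: S) M2 ->
  Eprod rho ((M1 + adjmx M1) *m (M2 + adjmx M2)) =
  Eprod rho (M1 + adjmx M1) * Eprod rho (M2 + adjmx M2).
Proof.
move=> tr1 L1 L2; have L1' := local_adjmx L1; have L2' := local_adjmx L2.
rewrite mulmxDl !mulmxDr !expectD.
rewrite (expect_mul_local tr1 L1 L2) (expect_mul_local tr1 L1 L2').
rewrite (expect_mul_local tr1 L1' L2) (expect_mul_local tr1 L1' L2').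
by rewrite mulrDl !mulrDr !addrA.
Qed.

End PermutedTensor.

Section Blocks.
Variables (R : realType) (d n k : nat) (O : 'M[R[i]]_d).
Hypothesis k_gt0 : (0 < k)%N.
Local Notation C := R[i].

Definition block i : {set 'I_n} := [set t : 'I_n | i * k <= t < i * k + k]%N.

Definition block_site_op i (t : 'I_n) : 'M[C]_d :=
  if val t == (i * k)%N then O else 1%:M.

Definition block_perm i : {perm 'I_n} := sJ (@Jblock_uniq n k i).

Lemma Ablk_ptens i : Ablk n k O i = ptens (block_perm i) (block_site_op i).
Proof. exact: Uperm_mul_tens. Qed.

Lemma perm_on_block i : perm_on (block i) (block_perm i).
Proof.
apply/subsetP => t; rewrite !inE permE next_nth /Jblock mem_pmap_sub mem_iota.
by case: ifP => // _; rewrite eqxx.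
Qed.

Lemma block_site_op_out i t : t \notin block i -> block_site_op i t = 1%:M.
Proof.
rewrite /block_site_op inE; case: eqP => // ->.
by rewrite leqnn -{1}[(i * k)%N]addn0 ltn_add2l k_gt0.
Qed.

Lemma local_Ablk i : local (block i) (Ablk n k O i).
Proof.
exists (block_perm i), (block_site_op i).
by split; [exact: Ablk_ptens | exact: perm_on_block | exact: block_site_op_out].
Qed.

Lemma block_disjoint i j : i != j -> block j \subset ~: block i.
Proof.
move=> ij; apply/subsetP => t; rewrite !inE => /andP[jt tj].
apply/negP => /andP[it ti].
case: (ltngtP i j) ij => // [lt_ij|lt_ji] _.
- have : (i * k + k <= j * k)%N by rewrite -mulSnr leq_mul2r lt_ij orbT.
  by move/leq_trans/(_ jt); rewrite leqNgt ti.
- have : (j * k + k <= i * k)%N by rewrite -mulSnr leq_mul2r lt_ji orbT.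
  by move/leq_trans/(_ it); rewrite leqNgt tj.
Qed.

Lemma block_start_lt i : (i < n %/ k)%N -> (i * k < n)%N.
Proof. by rewrite leq_divRL // => /(leq_trans _); apply; rewrite ltn_pmul2r. Qed.

Lemma expect_Ablk_mul_adjmx rho i :
  (i * k < n)%N -> \tr rho = 1 -> is_hermitian O ->
  expect (tens (fun _ : 'I_n => rho)) (Ablk n k O i *m adjmx (Ablk n k O i)) =
  \tr (O *m O *m rho).
Proof.
move=> ilt tr1 hO; pose t0 := Ordinal ilt.
rewrite Ablk_ptens adjmx_ptens ptens_mul mulVg.
rewrite (expect_single_site (t0 := block_perm i t0)) //.
  by rewrite permK /block_site_op eqxx hO.
move=> t t_neq; rewrite /block_site_op; case: eqP => [tE|_].
  case/eqP: t_neq; rewrite -[t](permKV (block_perm i)).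
  by congr (block_perm i _); exact: val_inj.
by rewrite adjmx1 mulmx1.
Qed.

Lemma expect_adjmx_mul_Ablk rho i :
  (i * k < n)%N -> \tr rho = 1 -> is_hermitian O ->
  expect (tens (fun _ : 'I_n => rho)) (adjmx (Ablk n k O i) *m Ablk n k O i) =
  \tr (O *m O *m rho).
Proof.
move=> ilt tr1 hO; pose t0 := Ordinal ilt.
rewrite Ablk_ptens adjmx_ptens ptens_mul mulgV (expect_single_site (t0 := t0)) //.
  by rewrite permK /block_site_op eqxx hO.
move=> t t_neq; rewrite permK /block_site_op; case: eqP => [tE|_].
  by case/eqP: t_neq; exact: val_inj.
by rewrite adjmx1 mulmx1.
Qed.

Lemma variance_hermpart_Ablk_le (V : 'M[C]_d) i : (i * k < n)%N ->
  is_hermitian O -> \tr (V *m adjmx V) = 1 ->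
  variance (tens (fun _ : 'I_n => V *m adjmx V))
    (Ablk n k O i + adjmx (Ablk n k O i)) <= (4 * opnorm O ^+ 2)%:C%C.
Proof.
move=> ilt hO tr1; set A := Ablk n k O i.
have hermA : adjmx (A + adjmx A) = A + adjmx A by rewrite adjmxD adjmxK addrC.
rewrite [in variance _]tens_mul_adj.
apply: le_trans (variance_le_expect _ hermA) _.
apply: le_trans (expect_sqr_hermpart_le _ _) _.
rewrite -tens_mul_adj expect_Ablk_mul_adjmx // expect_adjmx_mul_Ablk //.
have O2_le := expect_sqr_le_opnorm hO tr1.
have -> : (4 * opnorm O ^+ 2)%:C%C =
          2 * ((opnorm O ^+ 2)%:C%C + (opnorm O ^+ 2)%:C%C) :> C.
  by rewrite rmorphM /= rmorph_nat; ring.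
by rewrite ler_wpM2l // lerD.
Qed.

End Blocks.

Lemma block_average_bound (F : realFieldType) (o : F) (n k : nat) :
  0 <= o -> (0 < k)%N -> (k <= n)%N ->
  (2 * (n %/ k)%:R)^-1 ^+ 2 * (4 * o *+ (n %/ k)) <= 2 * k%:R * o / n%:R.
Proof.
move=> o_ge0 k_gt0 k_le_n; set m := (n %/ k)%N.
have m_gt0 : (0 < m)%N by rewrite divn_gt0.
have n_le : (n <= 2 * k * m)%N.
  rewrite mulnAC mul2n -addnn; apply: leq_trans (ltnW (ltn_ceil n k_gt0)) _.
  by rewrite leq_mul2r -addn1 leq_add2l m_gt0 orbT.
have m_pos : (0 : F) < m%:R by rewrite ltr0n.
have -> : (2 * m%:R)^-1 ^+ 2 * (4 * o *+ m) = o / m%:R by field; rewrite gt_eqF.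
rewrite ler_pdivrMr // mulrAC ler_pdivlMr ?ltr0n ?(leq_trans k_gt0) //.
have -> : 2 * k%:R * o * m%:R = o * (2 * k * m)%:R by rewrite !natrM; ring.
by rewrite ler_wpM2l // ler_nat.
Qed.

Unset Implicit Arguments.

Theorem lemma2p19 (R : realType) (d : nat) (O rho : 'M[R[i]]_d) (n k : nat) :
  is_hermitian O -> is_state rho -> (1 <= n)%N -> (1 <= k)%N -> (k <= n)%N ->
  @Var R d n rho (@Tk R d n k O) <= real_complex R (2 * k%:R * opnorm O ^+ 2 / n%:R).
Proof.
move=> hO [hrho [psd_rho tr1]] _ k_gt0 k_le_n.
have [V rhoE] := psd_factor hrho psd_rho.
rewrite VarE /Tk varianceZ variance_sum_uncorrelated => [|i j ij]; last first.
  apply: expect_mul_local_hermpart (local_Ablk _ _ k_gt0 _) _ => //.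
  exact: local_subset (block_disjoint _ _ ij) (local_Ablk _ _ k_gt0 _).
have block_le (i : 'I_(n %/ k)) :
    variance (tens (fun _ : 'I_n => rho)) (Ablk n k O i + adjmx (Ablk n k O i))
    <= (4 * opnorm O ^+ 2)%:C%C.
  rewrite rhoE in tr1 *.
  by apply: variance_hermpart_Ablk_le; rewrite ?block_start_lt.
set c := (X in X ^+ 2 * _).
(* Both sides agree up to the structure instances typing [2 * _]. *)
have c_real : c = ((2 * (n %/ k)%:R)^-1 : R)%:C%C.
  by rewrite /c fmorphV rmorphM /= !rmorph_nat; reflexivity.
apply: le_trans (ler_wpM2l _ (ler_sum _ (fun i _ => block_le i))) _.
  by rewrite exprn_ge0 // invr_ge0 mulr_ge0 // ler0n.
rewrite sumr_const card_ord c_real -rmorphMn -rmorphXn -rmorphM /= lecR.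
exact: block_average_bound (sqr_ge0 _) k_gt0 k_le_n.
Qed.
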